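(* There is an absolute constant $C>0$ such that for every integer $q\geq 4$ and every positive integer $n$, \[ F_{q,q-1}(n)\leq G_{q,q-1}(n)\leq n^{1+C/\sqrt{\log q}}. \] In particular, for every fixed $\varepsilon>0$ there is $q_0(\varepsilon)$ such that for all integers $q\geq q_0(\varepsilon)$ and all positive integers $n$, $F_{q,q-1}(n)\leq G_{q,q-1}(n)\leq n^{1+\varepsilon}$.
   Context: Logarithms are to base $2$, and $[n]=\{1,\dots,n\}$. For integers $q\geq r\geq 1$ and $x,y\in\mathbb{R}^q$, write $x<_r y$ if there are at least $r$ coordinates $i\in[q]$ with $x_i<y_i$. $F_{q,r}(n)$ is the maximum $N$ such that there exist vectors $x_1,\dots,x_N\in[n]^q$ with $x_a<_r x_b$ for all $1\leq a<b\leq N$ (an $r$-increasing sequence). $G_{q,r}(n)$ is the maximum size of a set $S\subseteq[n]^q$ such that for all distinct $x,y\in S$, either $x<_r y$ or $y<_r x$ (an $r$-comparable set). *)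

From mathcomp Require Import all_boot.
From Stdlib Require Import Reals.
Set Implicit Arguments. Unset Strict Implicit. Unset Printing Implicit Defensive.

(* Points of [n]^q : functions 'I_q -> 'I_n ('I_n = {0,..,n-1}, an order-
   preserving relabelling of [n] = {1,..,n}). *)
Definition pt (q n : nat) := {ffun 'I_q -> 'I_n}.

Definition rlt (q n r : nat) (x y : pt q n) : bool :=
  r <= #|[set i : 'I_q | (x i < y i)%N]|.

Definition r_increasing (q n r : nat) (s : seq (pt q n)) : bool :=
  pairwise (@rlt q n r) s.

Definition r_comparable (q n r : nat) (S : {set pt q n}) : bool :=
  [forall x in S, forall y in S, (x != y) ==> (rlt r x y || rlt r y x)].

(* N ranges over 0..n^q; for r >= 1 an r-increasing sequence has distinct
   entries (x <_r x is false), so this bound is no restriction. *)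
Definition F (q r n : nat) : nat :=
  \max_(N < #|{: pt q n}|.+1 |
        [exists s : N.-tuple (pt q n), r_increasing r (tval s)]) (N : nat).

Definition G (q r n : nat) : nat :=
  \max_(S : {set pt q n} | r_comparable r S) #|S|.

From HB Require Import structures.
From mathcomp Require Import all_boot zify.
From Stdlib Require Import Reals Lra.
Set Implicit Arguments. Unset Strict Implicit. Unset Printing Implicit Defensive.

(* An r-increasing sequence spans an r-comparable set, whence F <= G. For
   q >= 4 the relation <_{q-1} has no cycles of length 1, 2 or 3, so a
   (q-1)-comparable set A is a chain. Let Phi(A) be the sum over coordinates i
   and values v of c ln c, c the number of points of A whose i-th coordinate
   is v; convexity gives Phi(A) >= q N ln (N / n) for N = |A|. Cut the chain
   into its lower half P and upper half Q: Phi(A) - Phi(P) - Phi(Q) sums, over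
   the coordinates, the entropy of splitting the i-th value distribution of A
   into those of P and Q. A pair of P x Q is inverted in at most one
   coordinate, so at most 4^k coordinates carry more than |P||Q| / 4^k
   inversions; in every other one a threshold value separates P from Q up to
   a 2^-k fraction, and the entropy term is O(k 2^-k) times the full one. Once
   q >= 2 (k+1) 4^k, induction gives Phi(A) <= 2 q N ln N / (k+1), hence
   N <= n^((k+1)/(k-1)). Taking k about sqrt(log2 q) yields the exponent
   1 + 10 / sqrt(log2 q); for q < 2^100 the bound N <= n^2 suffices. *)

Lemma exists_in_setI3 (T : finType) (A B C : {set T}) :
  #|~: A| + #|~: B| + #|~: C| < #|T| -> exists x, [/\ x \in A, x \in B & x \in C].
Proof.
move=> small; case: (set_0Vmem (A :&: B :&: C)) => [ABC0|[x]]; last first.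
  by rewrite !inE => /andP[/andP[? ?] ?]; exists x.
have cover : ~: A :|: ~: B :|: ~: C = [set: T] by rewrite -!setCI ABC0 setC0.
have : #|~: A :|: ~: B :|: ~: C| <= #|~: A| + #|~: B| + #|~: C|.
  by apply: leq_trans (leq_card_setU _ _) _; rewrite leq_add2r leq_card_setU.
by rewrite cover cardsT; lia.
Qed.

Section RIncreasingOrder.

Variables (q n r : nat).
Implicit Types (x y z : pt q n) (A B : {set pt q n}).

Lemma rlt_card_setC x y : rlt r x y -> r + #|~: [set i | x i < y i]| <= q.
Proof.
rewrite /rlt; have := cardsC [set i | x i < y i]; rewrite card_ord.
set c := #|_|; set d := #|_|; lia.
Qed.

Lemma rlt_irr x : 0 < r -> ~~ rlt r x x.
Proof.
move=> r_gt0; rewrite /rlt -ltnNge.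
suff -> : [set i | x i < x i] = set0 by rewrite cards0.
by apply/setP => i; rewrite !inE ltnn.
Qed.

Lemma rlt_asym x y : q < 2 * r -> rlt r x y -> ~~ rlt r y x.
Proof.
move=> r_large xy; apply/negP => yx.
have := rlt_card_setC xy; have := rlt_card_setC yx => c_yx c_xy.
have [i [xy_i yx_i _]] : exists i,
    [/\ i \in [set i | x i < y i], i \in [set i | y i < x i] & i \in [set: 'I_q]].
  by apply: exists_in_setI3; rewrite setCT cards0 card_ord; lia.
by move: xy_i yx_i; rewrite !inE => /ltn_trans/[apply]; rewrite ltnn.
Qed.

Lemma rlt_acyclic3 x y z : 2 * q < 3 * r -> rlt r x y -> rlt r y z -> ~~ rlt r z x.
Proof.
move=> r_large xy yz; apply/negP => zx.
have := rlt_card_setC xy; have := rlt_card_setC yz; have := rlt_card_setC zx.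
move=> c_zx c_yz c_xy.
have [i [xy_i yz_i zx_i]] : exists i, [/\ i \in [set i | x i < y i],
    i \in [set i | y i < z i] & i \in [set i | z i < x i]].
  by apply: exists_in_setI3; rewrite card_ord; lia.
move: xy_i yz_i zx_i; rewrite !inE => /ltn_trans/[apply]/ltn_trans/[apply].
by rewrite ltnn.
Qed.

Lemma r_comparableP A :
  reflect {in A &, forall x y, x != y -> rlt r x y || rlt r y x} (r_comparable r A).
Proof.
apply: (iffP forall_inP) => [cmp x y xA yA | cmp x xA].
  exact/implyP/(forall_inP (cmp x xA)).
by apply/forall_inP => y yA; apply/implyP; apply: cmp.
Qed.

Lemma r_comparableS A B : B \subset A -> r_comparable r A -> r_comparable r B.
Proof.
move=> /subsetP BA /r_comparableP cmp; apply/r_comparableP => x y xB yB.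
by apply: cmp; apply: BA.
Qed.

Lemma r_comparable_halves A : q < 2 * r -> 2 * q < 3 * r -> r_comparable r A ->
  exists P Q, [/\ A = P :|: Q, [disjoint P & Q], #|P| = #|A|./2,
                  #|Q| = #|A| - #|A|./2 & {in P & Q, forall x y, rlt r x y}].
Proof.
move=> asym acyc /r_comparableP cmpA.
pose le x y := (x == y) || rlt r x y.
have le_total : {in mem A &, total le}.
  move=> x y xA yA; rewrite /le; case: (eqVneq x y) => [-> //|nxy].
  exact: cmpA.
have le_trans : {in mem A & &, transitive le}.
  move=> y x z yA xA zA /orP[/eqP-> // | xy] /orP[/eqP<- | yz].
    by rewrite /le xy orbT.
  rewrite /le; case: (eqVneq x z) => [exz | nxz] /=.
    by move: (rlt_asym asym xy); rewrite exz yz.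
  by case/orP: (cmpA x z xA zA nxz) => // zx; move: (rlt_acyclic3 acyc xy yz); rewrite zx.
pose s := sort le (enum A).
have s_uniq : uniq s by rewrite sort_uniq enum_uniq.
have s_size : size s = #|A| by rewrite size_sort cardE.
have s_pairwise : pairwise le s.
  rewrite -(sorted_pairwise_in le_trans); last first.
    by apply/allP => x; rewrite mem_sort mem_enum.
  by apply: (sort_sorted_in le_total); apply/allP => x; rewrite mem_enum.
pose h := #|A|./2.
have := s_uniq; rewrite -(cat_take_drop h s) cat_uniq.
move=> /and3P[take_uniq /hasPn disj drop_uniq].
exists [set x in take h s], [set x in drop h s]; split.
- by apply/setP => x; rewrite !inE -mem_cat cat_take_drop mem_sort mem_enum.
- by apply/pred0P => x; rewrite /= !inE; apply/negP => /andP[xl /disj]; rewrite xl.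
- by rewrite cardsE (card_uniqP take_uniq) size_take s_size /h; case: ltnP; lia.
- by rewrite cardsE (card_uniqP drop_uniq) size_drop s_size.
move=> x y; rewrite !inE => xl yr.
move: s_pairwise; rewrite -(cat_take_drop h s) pairwise_cat => /and3P[/allrelP le_lr _ _].
have := le_lr x y xl yr; rewrite /le; case: eqP => //= exy.
by move: (disj y yr); rewrite -exy xl.
Qed.

End RIncreasingOrder.

Section Comparable.

Variables q n r : nat.
Implicit Types (A : {set pt q n}) (s : seq (pt q n)).

Lemma r_increasing_comparable s : r_increasing r s ->
  {in s &, forall x y, x != y -> rlt r x y || rlt r y x}.
Proof.
elim: s => // a s IH /= /andP[/allP a_lt s_incr] x y.
rewrite !inE => /orP[/eqP-> | xs] /orP[/eqP-> | ys].
- by rewrite eqxx.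
- by rewrite a_lt.
- by rewrite a_lt ?orbT.
- exact: IH.
Qed.

Lemma F_le_G : (0 < r)%nat -> (F q r n <= G q r n)%nat.
Proof.
move=> r_gt0; apply/bigmax_leqP => N /existsP[s s_incr].
have s_uniq : uniq s.
  by apply: (pairwise_uniq _ s_incr) => x; apply/negbTE/rlt_irr.
have cmp : r_comparable r [set x in s].
  apply/r_comparableP => x y; rewrite !inE; exact: r_increasing_comparable.
rewrite -(size_tuple s) -(card_uniqP s_uniq) -cardsE.
exact: (@leq_bigmax_cond _ (r_comparable r) (fun S : {set pt q n} => #|S|) _ cmp).
Qed.

Lemma INR_G_le (B : R) : (forall A, r_comparable r A -> (INR #|A| <= B)%R) ->
  (INR (G q r n) <= B)%R.
Proof.
have cmp0 : r_comparable r (set0 : {set pt q n}) by apply/forall_inP => x; rewrite inE.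
move=> B_ge; rewrite /G (bigmax_eq_arg _ cmp0).
by case: arg_maxnP => // S cmpS _; apply: B_ge.
Qed.

(* A point of such a set is determined by its first two coordinates. *)
Lemma r_comparable_card_le_sq A : (1 < q)%nat -> (q < r + 2)%nat -> r_comparable r A ->
  (#|A| <= n * n)%nat.
Proof.
move=> q_gt1 r_large /r_comparableP cmpA.
pose i0 := Ordinal (ltnW q_gt1); pose i1 := Ordinal q_gt1.
have agree_not_rlt (x y : pt q n) : x i0 = y i0 -> x i1 = y i1 -> ~~ rlt r x y.
  move=> e0 e1; apply/negP => /rlt_card_setC.
  suff : #|[set i0; i1]| <= #|~: [set i | x i < y i]|.
    by rewrite cards2 (_ : i0 != i1) //; lia.
  apply/subset_leq_card/subsetP => i; rewrite !inE.
  by case/orP => /eqP->; rewrite ?e0 ?e1 ltnn.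
have inj : {in A &, injective (fun x : pt q n => (x i0, x i1))}.
  move=> x y xA yA [e0 e1]; apply/eqP; apply: contraT => nxy.
  case/orP: (cmpA x y xA yA nxy) => lt.
    by move: (agree_not_rlt x y e0 e1); rewrite lt.
  by move: (agree_not_rlt y x (esym e0) (esym e1)); rewrite lt.
rewrite -(card_in_imset inj); apply: leq_trans (max_card _) _.
by rewrite card_prod !card_ord.
Qed.

End Comparable.

Lemma card_set_predE (T : finType) (A : {set T}) (p : pred T) :
  #|[set x in A | p x]| = \sum_(x in A) p x.
Proof.
rewrite -sum1dep_card [LHS]big_mkcond [RHS]big_mkcond /=.
by apply: eq_bigr => x _; case: (x \in A); case: (p x).
Qed.

Lemma sum_bool_le_card (T : finType) (A : {set T}) (p : pred T) :
  \sum_(x in A) p x <= #|A|.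
Proof. by rewrite -sum1_card; apply: leq_sum => x _; case: (p x). Qed.

Section CoordinateCounts.

Variables q n : nat.
Implicit Types (A P Q : {set pt q n}) (i : 'I_q).

Definition coord_count A i (v : 'I_n) := #|[set x in A | x i == v]|.

Lemma sum_coord_count_pred A i (p : pred 'I_n) :
  \sum_(v < n | p v) coord_count A i v = \sum_(x in A) p (x i).
Proof.
rewrite (eq_bigr (fun v => \sum_(x in A) (x i == v))); last first.
  by move=> v _; exact: card_set_predE.
rewrite exchange_big /=; apply: eq_bigr => x _.
rewrite big_mkcond (bigD1 (x i)) //= eqxx big1 ?addn0; first by case: (p (x i)).
by move=> v; rewrite eq_sym => /negbTE ->; case: (p v).
Qed.

Lemma sum_coord_count A i : \sum_(v < n) coord_count A i v = #|A|.
Proof. by rewrite (sum_coord_count_pred A i predT) -sum1_card. Qed.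

Lemma coord_countU P Q i v : [disjoint P & Q] ->
  coord_count (P :|: Q) i v = coord_count P i v + coord_count Q i v.
Proof.
move=> PQ; rewrite /coord_count -cardsUI.
suff -> : [set x in P | x i == v] :&: [set x in Q | x i == v] = set0.
  by rewrite cards0 addn0; apply: eq_card => x; rewrite !inE andb_orl.
apply/setP => x; rewrite !inE; apply/negP => /andP[/andP[xP _] /andP[xQ _]].
by move/pred0P/(_ x): PQ; rewrite /= xP xQ.
Qed.

Lemma coord_count_le_card A i v : coord_count A i v <= #|A|.
Proof. by apply: subset_leq_card; apply/subsetP => x; rewrite inE => /andP[]. Qed.

Definition inversions P Q i := \sum_(x in P) \sum_(y in Q) (y i <= x i).

Lemma sum_inversions_le P Q : {in P & Q, forall x y, rlt (q - 1) x y} ->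
  \sum_(i < q) inversions P Q i <= #|P| * #|Q|.
Proof.
move=> PltQ; rewrite /inversions exchange_big /= -sum1_card big_distrl /=.
apply: leq_sum => x xP; rewrite exchange_big /= mul1n -sum1_card.
apply: leq_sum => y yQ; have := rlt_card_setC (PltQ x y xP yQ).
suff -> : \sum_(i < q) (y i <= x i) = #|~: [set i | x i < y i]| by lia.
transitivity #|[set i | y i <= x i]|; last by apply: eq_card => i; rewrite !inE leqNgt.
by rewrite -sum1dep_card [RHS]big_mkcond; apply: eq_bigr => i _; case: leqP.
Qed.

Lemma threshold_mul_le_inversions P Q i (s : nat) :
  (\sum_(x in P) (s <= x i)) * (\sum_(y in Q) (y i <= s)) <= inversions P Q i.
Proof.
rewrite /inversions big_distrl /=; apply: leq_sum => x _.
rewrite big_distrr /=; apply: leq_sum => y _.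
by case: (leqP s (x i)) => sx; case: (leqP (y i) s) => ys //=; rewrite (leq_trans ys sx).
Qed.

(* Take t least with m * #{x in P | t <= x i} <= #|P|. If t > 0, more than
   |P| / m points of P lie at or above t - 1, and each is inverted with every
   point of Q at or below t - 1. *)
Lemma exists_threshold P Q i (m : nat) :
  0 < #|P| -> m * m * inversions P Q i <= #|P| * #|Q| ->
  exists t, m * (\sum_(x in P) (t <= x i)) <= #|P| /\
            m * (\sum_(y in Q) (y i < t)) <= #|Q|.
Proof.
move=> P_gt0 few_inv.
pose above t := \sum_(x in P) (t <= x i).
have [|t above_t t_min] := ex_minnP (ex_intro (fun t => m * above t <= #|P|) n _).
  by rewrite /above big1 ?muln0 // => x _; rewrite leqNgt ltn_ord.
exists t; split => //; case: t above_t t_min => [|s] _ s_min.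
  by rewrite big1 ?muln0.
have above_s : #|P| < m * above s by rewrite ltnNge; apply/negP => /s_min; rewrite ltnn.
change (m * \sum_(y in Q) (y i <= s) <= #|Q|).
have := threshold_mul_le_inversions P Q i s; rewrite -/(above s).
move: above_s few_inv; set b := \sum_(y in Q) _; set a := above s.
set R := inversions P Q i; set p := #|P|; set r := #|Q|; nia.
Qed.

Lemma count_heavy_coords_le P Q (M : nat) : {in P & Q, forall x y, rlt (q - 1) x y} ->
  \sum_(i < q) (#|P| * #|Q| < M * inversions P Q i) <= M.
Proof.
move=> /sum_inversions_le inv_le; set heavy := \sum_(i < q) _.
have : heavy * (#|P| * #|Q| + 1) <= M * (#|P| * #|Q|).
  rewrite /heavy big_distrl /=.
  apply: leq_trans (_ : \sum_(i < q) M * inversions P Q i <= _).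
    by apply: leq_sum => i _; case: ltnP => //= heavy_i; lia.
  by rewrite -big_distrr /= leq_mul2l inv_le orbT.
set p := #|P| * #|Q|; nia.
Qed.

End CoordinateCounts.

HB.instance Definition _ := Monoid.isComLaw.Build R 0%R Rplus
  (fun x y z => esym (Rplus_assoc x y z)) Rplus_comm Rplus_0_l.

Section RealSums.

Local Open Scope R_scope.

Lemma Rsum_ge0 (I : Type) (r : seq I) (P : pred I) (f : I -> R) :
  (forall i, P i -> 0 <= f i) -> 0 <= \big[Rplus/0]_(i <- r | P i) f i.
Proof. by move=> f_ge0; apply: big_ind => // *; lra. Qed.

Lemma Rsum_le (I : Type) (r : seq I) (P : pred I) (f g : I -> R) :
  (forall i, P i -> f i <= g i) ->
  \big[Rplus/0]_(i <- r | P i) f i <= \big[Rplus/0]_(i <- r | P i) g i.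
Proof. by move=> fg; apply: (big_ind2 Rle) => // *; lra. Qed.

Lemma INR_sum (I : Type) (r : seq I) (P : pred I) (f : I -> nat) :
  INR (\sum_(i <- r | P i) f i) = \big[Rplus/0]_(i <- r | P i) INR (f i).
Proof. exact: (big_morph INR plus_INR). Qed.

Lemma leq_INR (a b : nat) : (a <= b)%nat -> INR a <= INR b.
Proof. by move/leP/le_INR. Qed.

Lemma Rsum_const_ord k (c : R) : \big[Rplus/0]_(i < k) c = INR k * c.
Proof.
elim: k => [|k IH]; first by rewrite big_ord0 /=; ring.
by rewrite big_ord_recr IH S_INR /=; ring.
Qed.

End RealSums.

Section Entropy.

Local Open Scope R_scope.

Lemma ln_le x y : 0 < x -> x <= y -> ln x <= ln y.
Proof. by move=> x_gt0 [/(ln_increasing _ _ x_gt0)|<-]; lra. Qed.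

Lemma ln_div x y : 0 < x -> 0 < y -> ln (x / y) = ln x - ln y.
Proof. by move=> x_gt0 y_gt0; rewrite ln_mult ?ln_Rinv //; apply: Rinv_0_lt_compat. Qed.

Lemma ln_le_sub1 x : 0 < x -> ln x <= x - 1.
Proof. by move=> x_gt0; have := exp_ineq1_le (ln x); rewrite exp_ln //; lra. Qed.

Definition xlnx (x : R) := x * ln x.

(* The entropy of splitting a mass x + y into x and y: (x + y) times the binary
   entropy (in nats) of x / (x + y). *)
Definition split_entropy (x y : R) := xlnx (x + y) - xlnx x - xlnx y.

Lemma xlnx0 : xlnx 0 = 0. Proof. by rewrite /xlnx Rmult_0_l. Qed.

Lemma xlnx_nat_le1 (k : nat) : (k <= 1)%nat -> xlnx (INR k) = 0.
Proof. by case: k => [|[|]] //= _; rewrite /xlnx ?ln_1; ring. Qed.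

Lemma xlnx_ge_tangent a b : 0 <= a -> 0 < b -> a * ln b + a - b <= xlnx a.
Proof.
move=> [a_gt0|<-] b_gt0; last by rewrite xlnx0; lra.
have := ln_le_sub1 (Rdiv_lt_0_compat _ _ b_gt0 a_gt0); rewrite ln_div // /xlnx.
have -> : b / a - 1 = (b - a) / a by field; lra.
move=> /(Rmult_le_compat_l a _ _ (Rlt_le _ _ a_gt0)).
have -> : a * ((b - a) / a) = b - a by field; lra.
lra.
Qed.

Lemma split_entropy0r x : split_entropy x 0 = 0.
Proof. by rewrite /split_entropy Rplus_0_r xlnx0; ring. Qed.

Lemma split_entropy0l y : split_entropy 0 y = 0.
Proof. by rewrite /split_entropy Rplus_0_l xlnx0; ring. Qed.

Lemma split_entropyC x y : split_entropy x y = split_entropy y x.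
Proof. by rewrite /split_entropy Rplus_comm; ring. Qed.

(* The log-sum inequality: bound each a ln a from below by its tangent at
   (row sum) (column sum) / (total); these weights add up to the total. *)
Lemma split_entropy_superadditive_pos x1 y1 x2 y2 :
  0 <= x1 -> 0 <= y1 -> 0 <= x2 -> 0 <= y2 ->
  0 < x1 + x2 -> 0 < y1 + y2 -> 0 < x1 + y1 -> 0 < x2 + y2 ->
  split_entropy x1 y1 + split_entropy x2 y2 <= split_entropy (x1 + x2) (y1 + y2).
Proof.
move=> x1_ge0 y1_ge0 x2_ge0 y2_ge0 X_gt0 Y_gt0 s1_gt0 s2_gt0.
rewrite /split_entropy /xlnx (_ : x1 + x2 + (y1 + y2) = (x1 + y1) + (x2 + y2)); last ring.
set X := x1 + x2 in X_gt0 *; set Y := y1 + y2 in Y_gt0 *.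
set s1 := x1 + y1 in s1_gt0 *; set s2 := x2 + y2 in s2_gt0 *; set S := s1 + s2.
have S_gt0 : 0 < S by rewrite /S; lra.
have tangent a u v : 0 <= a -> 0 < u -> 0 < v ->
    a * (ln u + ln v - ln S) + a - u * v / S <= a * ln a.
  move=> a_ge0 u_gt0 v_gt0; have uv_gt0 := Rmult_lt_0_compat _ _ u_gt0 v_gt0.
  rewrite -ln_mult // -ln_div //; apply: xlnx_ge_tangent => //.
  exact: Rdiv_lt_0_compat.
have := tangent x1 X s1 x1_ge0 X_gt0 s1_gt0.
have := tangent x2 X s2 x2_ge0 X_gt0 s2_gt0.
have := tangent y1 Y s1 y1_ge0 Y_gt0 s1_gt0.
have := tangent y2 Y s2 y2_ge0 Y_gt0 s2_gt0.
have weights : X * s1 / S + X * s2 / S + Y * s1 / S + Y * s2 / S = S.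
  by move: S_gt0; rewrite /S /X /Y /s1 /s2 => ?; field; lra.
have eXl : X * ln X = x1 * ln X + x2 * ln X by rewrite {1}/X; ring.
have eYl : Y * ln Y = y1 * ln Y + y2 * ln Y by rewrite {1}/Y; ring.
have e1l : s1 * ln s1 = x1 * ln s1 + y1 * ln s1 by rewrite {1}/s1; ring.
have e2l : s2 * ln s2 = x2 * ln s2 + y2 * ln s2 by rewrite {1}/s2; ring.
have eSl : S * ln S = (x1 + x2 + y1 + y2) * ln S by rewrite {1}/S /s1 /s2; ring.
have eS : S = x1 + x2 + y1 + y2 by rewrite /S /s1 /s2; ring.
clearbody S X Y s1 s2; lra.
Qed.

Lemma split_entropy_superadditive x1 y1 x2 y2 :
  0 <= x1 -> 0 <= y1 -> 0 <= x2 -> 0 <= y2 ->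
  split_entropy x1 y1 + split_entropy x2 y2 <= split_entropy (x1 + x2) (y1 + y2).
Proof.
move=> x1_ge0 y1_ge0 x2_ge0 y2_ge0.
have [X0|X_gt0] : x1 + x2 = 0 \/ 0 < x1 + x2 by lra.
  have [-> ->] : x1 = 0 /\ x2 = 0 by lra.
  by rewrite Rplus_0_l !split_entropy0l; lra.
have [Y0|Y_gt0] : y1 + y2 = 0 \/ 0 < y1 + y2 by lra.
  have [-> ->] : y1 = 0 /\ y2 = 0 by lra.
  by rewrite Rplus_0_l !split_entropy0r; lra.
have [s10|s1_gt0] : x1 + y1 = 0 \/ 0 < x1 + y1 by lra.
  have [-> ->] : x1 = 0 /\ y1 = 0 by lra.
  by rewrite !Rplus_0_l split_entropy0l; lra.
have [s20|s2_gt0] : x2 + y2 = 0 \/ 0 < x2 + y2 by lra.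
  have [-> ->] : x2 = 0 /\ y2 = 0 by lra.
  by rewrite !Rplus_0_r split_entropy0l; lra.
exact: split_entropy_superadditive_pos.
Qed.

Lemma split_entropy_sum (I : Type) (r : seq I) (P : pred I) (f g : I -> R) :
  (forall i, 0 <= f i) -> (forall i, 0 <= g i) ->
  \big[Rplus/0]_(i <- r | P i) split_entropy (f i) (g i) <=
  split_entropy (\big[Rplus/0]_(i <- r | P i) f i) (\big[Rplus/0]_(i <- r | P i) g i).
Proof.
move=> f_ge0 g_ge0; elim: r => [|a r IH]; first by rewrite !big_nil split_entropy0l; lra.
rewrite !big_cons; case: ifP => // Pa.
apply: Rle_trans (split_entropy_superadditive _ _ _ _) => //; first lra.
  by apply: Rsum_ge0.
by apply: Rsum_ge0.
Qed.

Lemma split_entropy_le_small x y w N : 0 <= x -> 0 <= y -> x + y <= N ->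
  y <= w -> 0 < w -> w <= N -> split_entropy x y <= w * ln (N / w) + w.
Proof.
move=> x_ge0 y_ge0 xyN yw w_gt0 wN.
have lnwN : ln w <= ln N by apply: ln_le.
rewrite ln_div //; last lra.
have [y0|y_gt0] : y = 0 \/ 0 < y by lra.
  by rewrite y0 split_entropy0r; nra.
have [x0|x_gt0] : x = 0 \/ 0 < x by lra.
  by rewrite x0 split_entropy0l; nra.
rewrite /split_entropy /xlnx.
have x_part : x * (ln (x + y) - ln x) <= y.
  have := ln_le_sub1 (Rdiv_lt_0_compat (x + y) x ltac:(lra) x_gt0).
  rewrite ln_div; try lra.
  move=> /(Rmult_le_compat_l x _ _ (Rlt_le _ _ x_gt0)).
  by have -> : x * ((x + y) / x - 1) = y by field; lra.
have y_part : y * (ln w - ln y) <= w - y.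
  have := ln_le_sub1 (Rdiv_lt_0_compat w y w_gt0 y_gt0); rewrite ln_div //.
  move=> /(Rmult_le_compat_l y _ _ (Rlt_le _ _ y_gt0)).
  by have -> : y * (w / y - 1) = w - y by field; lra.
have : y * (ln N - ln w) <= w * (ln N - ln w) by apply: Rmult_le_compat_r; lra.
have : y * ln (x + y) <= y * ln N by apply: Rmult_le_compat_l; [lra | apply: ln_le; lra].
lra.
Qed.

Lemma split_entropy_le_frac x y m N : 0 <= x -> 0 <= y -> x + y <= N ->
  1 <= m -> m * y <= N -> 0 < N -> split_entropy x y <= N / m * (ln m + 1).
Proof.
move=> x_ge0 y_ge0 xyN m_ge1 myN N_gt0.
have w_gt0 : 0 < N / m by apply: Rdiv_lt_0_compat; lra.
have -> : N / m * (ln m + 1) = N / m * ln (N / (N / m)) + N / m.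
  by rewrite (_ : N / (N / m) = m); [ring | field; lra].
apply: split_entropy_le_small => //.
  by apply: (Rmult_le_reg_l m); [lra | rewrite /Rdiv; field_simplify; lra].
by apply: (Rmult_le_reg_l m); [lra | rewrite /Rdiv; field_simplify; nra].
Qed.

Lemma split_entropy_ge_balanced a b : 0 < a -> a <= b -> b <= 2 * a ->
  (a + b) / 6 <= split_entropy a b.
Proof.
move=> a_gt0 ab b2a; rewrite /split_entropy /xlnx.
have ln_2a : ln 2 + ln a <= ln (a + b) by rewrite -ln_mult; [apply: ln_le|..]; lra.
have ln_b : ln b <= ln (a + b) by apply: ln_le; lra.
have : a * (ln 2 + ln a) <= a * ln (a + b) by apply: Rmult_le_compat_l; lra.
have : b * ln b <= b * ln (a + b) by apply: Rmult_le_compat_l; lra.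
have : a * / 2 <= a * ln 2 by apply: Rmult_le_compat_l; have := ln_lt_2; lra.
nra.
Qed.

Lemma sum_xlnx_ge k (c : 'I_k -> R) (N : R) : (0 < k)%nat -> 0 < N ->
  (forall v, 0 <= c v) -> \big[Rplus/0]_(v < k) c v = N ->
  N * ln (N / INR k) <= \big[Rplus/0]_(v < k) xlnx (c v).
Proof.
move=> k_gt0 N_gt0 c_ge0 sum_c.
have mean_gt0 : 0 < N / INR k.
  by apply: Rdiv_lt_0_compat => //; apply: lt_0_INR; apply/ltP.
set m := N / INR k.
apply: (@Rle_trans _ (\big[Rplus/0]_(v < k) (c v * ln m + c v - m))); last first.
  by apply: Rsum_le => v _; apply: xlnx_ge_tangent.
have -> : \big[Rplus/0]_(v < k) (c v * ln m + c v - m)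
    = (\big[Rplus/0]_(v < k) c v) * (ln m + 1) - \big[Rplus/0]_(v < k) m.
  by elim/big_rec3: _ => [|v y1 y2 y3 _ ->]; ring.
have -> : \big[Rplus/0]_(v < k) m = N.
  by rewrite Rsum_const_ord /m; field; apply: not_0_INR; lia.
by rewrite sum_c; lra.
Qed.

End Entropy.

Section Logarithms.

Local Open Scope R_scope.

Lemma ln2_le1 : ln 2 <= 1.
Proof. by have := ln_le_sub1 Rlt_0_2; lra. Qed.

Lemma ln2_gt0 : 0 < ln 2.
Proof. by have := ln_lt_2; lra. Qed.

Lemma INR_expn2 k : INR (expn 2 k) = 2 ^ k.
Proof. by elim: k => [|k IH] //; rewrite expnS mult_INR IH /=; ring. Qed.

Lemma ln_expn2_le k : ln (INR (expn 2 k)) <= INR k.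
Proof.
rewrite INR_expn2 ln_pow; last lra.
by have := ln2_le1; have := pos_INR k; nra.
Qed.

Definition log2 (x : R) := ln x / ln 2.

Lemma log2K x : log2 x * ln 2 = ln x.
Proof. by rewrite /log2; field; apply: Rgt_not_eq; exact: ln2_gt0. Qed.

Lemma log2_expn2_le j q : (expn 2 j <= q)%nat -> INR j <= log2 (INR q).
Proof.
move=> /leq_INR le_q; apply: (Rmult_le_reg_r _ _ _ ln2_gt0); rewrite log2K.
have := ln_le (lt_0_INR _ (ltP (expn_gt0 2 j))) le_q.
by rewrite INR_expn2 ln_pow //; lra.
Qed.

Lemma log2_lt_expn2 j q : (0 < q)%nat -> (q < expn 2 j)%nat -> log2 (INR q) < INR j.
Proof.
move=> q_gt0 /ltP/lt_INR q_lt; apply: (Rmult_lt_reg_r _ _ _ ln2_gt0); rewrite log2K.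
have := ln_increasing _ _ (lt_0_INR _ (ltP q_gt0)) q_lt.
by rewrite INR_expn2 ln_pow //; lra.
Qed.

End Logarithms.

Section Potential.

Variables q n : nat.
Implicit Types (A P Q : {set pt q n}) (i : 'I_q).
Local Open Scope R_scope.

Definition potential A :=
  \big[Rplus/0]_(i < q) \big[Rplus/0]_(v < n) xlnx (INR (coord_count A i v)).

Definition coord_entropy P Q i :=
  \big[Rplus/0]_(v < n) split_entropy (INR (coord_count P i v)) (INR (coord_count Q i v)).

Lemma potential_small A : (#|A| <= 1)%nat -> potential A = 0.
Proof.
move=> A_le1; rewrite /potential big1 // => i _; rewrite big1 // => v _.
by apply: xlnx_nat_le1; apply: leq_trans (coord_count_le_card A i v) A_le1.
Qed.

Lemma potentialU P Q : [disjoint P & Q] ->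
  potential (P :|: Q)
    = potential P + potential Q + \big[Rplus/0]_(i < q) coord_entropy P Q i.
Proof.
move=> PQ; rewrite /potential /coord_entropy -!big_split; apply: eq_bigr => i _.
rewrite -!big_split; apply: eq_bigr => v _.
by rewrite /= coord_countU // plus_INR /split_entropy; ring.
Qed.

Lemma coord_entropy_pred_le P Q i (p : pred 'I_n) :
  \big[Rplus/0]_(v < n | p v)
     split_entropy (INR (coord_count P i v)) (INR (coord_count Q i v))
  <= split_entropy (INR (\sum_(x in P) p (x i))) (INR (\sum_(y in Q) p (y i))).
Proof.
rewrite -!sum_coord_count_pred !INR_sum.
by apply: split_entropy_sum => v; apply: pos_INR.
Qed.

Lemma coord_entropy_le P Q i : coord_entropy P Q i <= split_entropy (INR #|P|) (INR #|Q|).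
Proof.
rewrite -!(sum_coord_count _ i) !INR_sum.
by apply: split_entropy_sum => v; apply: pos_INR.
Qed.

(* A threshold t (exists_threshold) cuts the values of coordinate i into two
   ranges, each of which is almost entirely occupied by P or by Q. *)
Lemma coord_entropy_le_light P Q i (m : nat) :
  (0 < #|P|)%nat -> (0 < m)%nat -> (m * m * inversions P Q i <= #|P| * #|Q|)%nat ->
  let N := INR (#|P| + #|Q|) in
  coord_entropy P Q i <= 2 * (N / INR m * (ln (INR m) + 1)).
Proof.
move=> P_gt0 m_gt0 light N.
have [t [P_above Q_below]] := exists_threshold P_gt0 light.
have entropy_le (a b : nat) : (a + b <= #|P| + #|Q|)%nat -> (m * b <= #|P| + #|Q|)%nat ->
    split_entropy (INR a) (INR b) <= N / INR m * (ln (INR m) + 1).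
  move=> ab mb; apply: split_entropy_le_frac; try exact: pos_INR.
  - by rewrite -plus_INR; apply: leq_INR.
  - exact: (leq_INR m_gt0).
  - by rewrite -mult_INR; apply: leq_INR.
  - by apply: lt_0_INR; apply/ltP; lia.
rewrite /coord_entropy (bigID (fun v : 'I_n => (v < t)%nat)) /=.
apply: Rle_trans (Rplus_le_compat _ _ _ _ (coord_entropy_pred_le P Q i _)
  (coord_entropy_pred_le P Q i _)) _.
rewrite [X in _ + X]split_entropyC.
have -> : (\sum_(x in P) ~~ (x i < t) = \sum_(x in P) (t <= x i))%nat.
  by apply: eq_bigr => x _; rewrite -leqNgt.
have X1_le := sum_bool_le_card P (fun x => x i < t)%nat.
have X2_le := sum_bool_le_card P (fun x => t <= x i)%nat.
have Y1_le := sum_bool_le_card Q (fun y => y i < t)%nat.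
have Y2_le := sum_bool_le_card Q (fun y => ~~ (y i < t))%nat.
have := entropy_le _ _ (leq_add X1_le Y1_le) (leq_trans Q_below (leq_addl _ _)).
have := entropy_le _ _ (leq_trans (leq_add Y2_le X2_le) (eq_leq (addnC _ _)))
  (leq_trans P_above (leq_addr _ _)).
lra.
Qed.

Lemma potential_ge A : (0 < n)%nat -> (0 < #|A|)%nat ->
  INR q * (INR #|A| * ln (INR #|A| / INR n)) <= potential A.
Proof.
move=> n_gt0 A_gt0; rewrite -Rsum_const_ord; apply: Rsum_le => i _.
apply: sum_xlnx_ge => //; first exact: lt_0_INR (ltP A_gt0).
  by move=> v; apply: pos_INR.
by rewrite -INR_sum sum_coord_count.
Qed.

End Potential.

Section SplitCost.

Local Open Scope R_scope.

Lemma light_entropy_le (K m N D : R) : 0 <= K -> 0 < m -> ln m <= K ->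
  0 < N -> N <= 6 * D ->
  2 * (N / m * (ln m + 1)) <= 12 * (K + 1) / m * D.
Proof.
move=> K_ge0 m_gt0 ln_m N_gt0 N_le.
apply: (Rmult_le_reg_r m) => //.
have -> : 2 * (N / m * (ln m + 1)) * m = 2 * N * (ln m + 1) by field; lra.
have -> : 12 * (K + 1) / m * D * m = 12 * (K + 1) * D by field; lra.
nra.
Qed.

(* Each of the at most M^2 heavy coordinates costs D, and every coordinate
   costs at most 12 K D / M besides. *)
Lemma heavy_light_le (heavy K M q D : R) : 0 < K -> 0 < M -> 0 <= D ->
  heavy <= M * M -> 2 * K * (M * M) <= q -> 8 * (K * K) <= M ->
  heavy * D + q * (12 * K / M * D) <= 2 / K * q * D.
Proof.
move=> K_gt0 M_gt0 D_ge0 heavy_le q_ge Mge.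
have q_ge0 : 0 <= q by nra.
suff : heavy + q * (12 * K / M) <= 2 / K * q.
  by move=> /(Rmult_le_compat_r D _ _ D_ge0); lra.
apply: (Rmult_le_reg_r (K * M)); first nra.
have -> : (heavy + q * (12 * K / M)) * (K * M) = heavy * K * M + 12 * q * (K * K).
  by field; lra.
have -> : 2 / K * q * (K * M) = 2 * q * M by field; lra.
have : heavy * K * M <= (M * M) * K * M.
  by apply: Rmult_le_compat_r; [lra | apply: Rmult_le_compat_r; lra].
have : (M * M) * K * M * 2 <= q * M by nra.
have : 12 * q * (K * K) <= 12 * q * M / 8 by nra.
lra.
Qed.

End SplitCost.

Section PotentialBound.

Variables q n k : nat.
Hypotheses (q_gt3 : (3 < q)%nat)
  (q_large : (2 * k.+1 * (expn 2 k * expn 2 k) <= q)%nat)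
  (k_large : (8 * (k.+1 * k.+1) <= expn 2 k)%nat).
Implicit Types (A P Q : {set pt q n}).
Local Open Scope R_scope.

Lemma cross_entropy_le P Q : {in P & Q, forall x y, rlt (q - 1) x y} ->
  (0 < #|P| <= #|Q|)%nat -> (#|Q| <= 2 * #|P|)%nat ->
  \big[Rplus/0]_(i < q) coord_entropy P Q i
    <= 2 / INR k.+1 * INR q * split_entropy (INR #|P|) (INR #|Q|).
Proof.
move=> PltQ /andP[P_gt0 PQ] Q_le.
set D := split_entropy _ _; set m := expn 2 k.
have m_gt0 : (0 < m)%nat by rewrite expn_gt0.
have m_gt0' : 0 < INR m by apply: lt_0_INR; apply/ltP.
have N_gt0 : 0 < INR (#|P| + #|Q|) by apply: lt_0_INR; apply/ltP; lia.
have N_le : INR (#|P| + #|Q|) <= 6 * D.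
  have := split_entropy_ge_balanced (lt_0_INR _ (ltP P_gt0)) (leq_INR PQ).
  by rewrite plus_INR -/D; have := leq_INR Q_le; rewrite mult_INR /=; lra.
pose heavy i := (#|P| * #|Q| < m * m * inversions P Q i)%nat.
have coord_le i : coord_entropy P Q i <= INR (heavy i) * D + 12 * INR k.+1 / INR m * D.
  have light_le := light_entropy_le (pos_INR k) m_gt0' (ln_expn2_le k) N_gt0 N_le.
  have light_ge0 : 0 <= 12 * INR k.+1 / INR m * D.
    apply: Rmult_le_pos; last lra.
    apply: Rlt_le; apply: Rdiv_lt_0_compat => //.
    by rewrite S_INR; have := pos_INR k; lra.
  rewrite S_INR in light_ge0 *; rewrite /heavy; case: ltnP => [_ | light].
    by have := coord_entropy_le P Q i; rewrite -/D (_ : INR true = 1) //; lra.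
  have := coord_entropy_le_light P_gt0 m_gt0 light.
  by rewrite (_ : INR false = 0) //; lra.
apply: (@Rle_trans _
  (\big[Rplus/0]_(i < q) (INR (heavy i) * D + 12 * INR k.+1 / INR m * D))).
  by apply: Rsum_le => i _; apply: coord_le.
have -> : \big[Rplus/0]_(i < q) (INR (heavy i) * D + 12 * INR k.+1 / INR m * D)
    = INR (\sum_(i < q) heavy i) * D + INR q * (12 * INR k.+1 / INR m * D).
  rewrite INR_sum -Rsum_const_ord.
  by elim/big_rec3: _ => [|i y1 y2 y3 _ ->]; ring.
apply: heavy_light_le => //.
- exact: lt_0_INR (ltP (ltn0Sn k)).
- lra.
- by rewrite -mult_INR; apply: leq_INR; apply: count_heavy_coords_le.
- by have := leq_INR q_large; rewrite !mult_INR.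
- by have := leq_INR k_large; rewrite !mult_INR (INR_IZR_INZ 8).
Qed.

Lemma potential_le A : r_comparable (q - 1) A ->
  potential A <= 2 / INR k.+1 * INR q * xlnx (INR #|A|).
Proof.
have [N] := ubnP #|A|; elim: N A => // N IH A A_lt cmpA.
have [A_le1 | A_gt1] := leqP #|A| 1.
  by rewrite potential_small // xlnx_nat_le1 // Rmult_0_r; lra.
have [P [Q [eA PQ cardP cardQ PltQ]]] :=
  r_comparable_halves (ltac:(lia) : (q < 2 * (q - 1))%nat)
    (ltac:(lia) : (2 * q < 3 * (q - 1))%nat) cmpA.
have cardA : #|A| = (#|P| + #|Q|)%nat by lia.
have cmpP : r_comparable (q - 1) P by apply: r_comparableS cmpA; rewrite eA subsetUl.
have cmpQ : r_comparable (q - 1) Q by apply: r_comparableS cmpA; rewrite eA subsetUr.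
have := IH P ltac:(lia) cmpP; have := IH Q ltac:(lia) cmpQ.
have := cross_entropy_le PltQ ltac:(lia) ltac:(lia).
rewrite eA potentialU // -eA cardA plus_INR.
by rewrite /split_entropy; lra.
Qed.

Lemma card_le_Rpower A : (2 <= k)%nat -> (0 < n)%nat -> r_comparable (q - 1) A ->
  INR #|A| <= Rpower (INR n) ((INR k + 1) / (INR k - 1)).
Proof.
move=> k_ge2 n_gt0 cmpA.
have [A0 | A_gt0] := posnP #|A|.
  by rewrite A0; apply: Rlt_le; apply: exp_pos.
have := Rle_trans _ _ _ (potential_ge n_gt0 A_gt0) (potential_le cmpA).
have N_gt0 : 0 < INR #|A| by exact: lt_0_INR (ltP A_gt0).
have n_gt0' : 0 < INR n by exact: lt_0_INR (ltP n_gt0).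
have q_gt0 : 0 < INR q by apply: lt_0_INR; apply/ltP; lia.
have k_ge2' : 2 <= INR k by apply: (leq_INR k_ge2).
rewrite ln_div // S_INR /xlnx; set N := INR #|A| in N_gt0 * => ineq.
have : ln N - ln (INR n) <= 2 / (INR k + 1) * ln N.
  apply: (Rmult_le_reg_l (INR q * N)); first exact: Rmult_lt_0_compat.
  have -> : INR q * N * (2 / (INR k + 1) * ln N) = 2 / (INR k + 1) * INR q * (N * ln N).
    by field; lra.
  lra.
move=> ln_le; rewrite /Rpower -[N]exp_ln //.
suff : ln N <= (INR k + 1) / (INR k - 1) * ln (INR n).
  by case=> [lt|->]; [apply: Rlt_le; apply: exp_increasing | lra].
apply: (Rmult_le_reg_l ((INR k - 1) / (INR k + 1))).
  by apply: Rdiv_lt_0_compat; lra.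
have -> : (INR k - 1) / (INR k + 1) * ((INR k + 1) / (INR k - 1) * ln (INR n))
    = ln (INR n) by field; lra.
have -> : (INR k - 1) / (INR k + 1) * ln N = ln N - 2 / (INR k + 1) * ln N by field; lra.
lra.
Qed.

End PotentialBound.

Lemma expn2_ge_8sq k : 10 <= k -> 8 * (k.+1 * k.+1) <= expn 2 k.
Proof.
move=> k_ge10; rewrite -(subnK k_ge10); elim: (k - 10) => [|j IH] //.
by rewrite !addSn expnS; move: IH; set e := expn 2 _; nia.
Qed.

Lemma expn2_sq_ge k : 10 <= k -> 2 * k.+1 * (expn 2 k * expn 2 k) <= expn 2 (k * k).
Proof.
move=> k_ge10; have := expn2_ge_8sq k_ge10 => k_small.
apply: (@leq_trans (expn 2 k * (expn 2 k * expn 2 k))).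
  by rewrite leq_mul2r; apply/orP; right; lia.
by rewrite -!expnD leq_pexp2l //; nia.
Qed.

Lemma exists_sq_log_bracket q : expn 2 100 <= q ->
  exists k, [/\ 10 <= k, expn 2 (k * k) <= q & q < expn 2 (k.+1 * k.+1)].
Proof.
move=> q_large.
have k_le_q k : expn 2 (k * k) <= q -> k <= q.
  move=> /(leq_trans _); apply; apply: ltnW.
  apply: leq_trans (ltn_expl k (isT : 1 < 2)) _.
  by rewrite leq_pexp2l //; nia.
have [k k_ok k_max] :=
  ex_maxnP (ex_intro (fun k => expn 2 (k * k) <= q) 10 q_large) k_le_q.
exists k; split => //; first exact: k_max.
by rewrite ltnNge; apply/negP => /k_max; lia.
Qed.

Section MainBound.

Local Open Scope R_scope.

Lemma sqrt_lt_of_lt_sq x a : 0 <= x -> 0 <= a -> x < a * a -> sqrt x < a.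
Proof.
by move=> x_ge0 a_ge0 x_lt; rewrite -(sqrt_square a) //; apply: sqrt_lt_1 => //; nra.
Qed.

Lemma exponent_le (K s : R) : 10 <= K -> 0 < s -> s < K + 1 ->
  (K + 1) / (K - 1) <= 1 + 10 / s.
Proof.
move=> K_ge10 s_gt0 s_lt.
have : 10 / (K + 1) <= 10 / s.
  by apply: Rmult_le_compat_l; [lra | apply: Rinv_le_contravar; lra].
suff : (K + 1) / (K - 1) <= 1 + 10 / (K + 1) by lra.
apply: (Rmult_le_reg_r ((K - 1) * (K + 1))); first nra.
have -> : (K + 1) / (K - 1) * ((K - 1) * (K + 1)) = (K + 1) * (K + 1) by field; lra.
have -> : (1 + 10 / (K + 1)) * ((K - 1) * (K + 1)) = (K - 1) * (K + 1) + 10 * (K - 1).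
  by field; lra.
nra.
Qed.

Lemma G_le_Rpower q n : (4 <= q)%nat -> (0 < n)%nat ->
  INR (G q (q - 1) n) <= Rpower (INR n) (1 + 10 / sqrt (log2 (INR q))).
Proof.
move=> q_ge4 n_gt0; have n_ge1 : 1 <= INR n by apply: (leq_INR n_gt0).
have log2q_ge2 : 2 <= log2 (INR q) := @log2_expn2_le 2 q q_ge4.
set s := sqrt _; have s_gt0 : 0 < s by apply: sqrt_lt_R0; lra.
apply: INR_G_le => A cmpA.
have [q_small | q_large] := ltnP q (expn 2 100).
  have s_lt : s < 10.
    have := log2_lt_expn2 (ltac:(lia) : (0 < q)%nat) q_small.
    by rewrite (INR_IZR_INZ 100 : INR 100 = 100) => ?; apply: sqrt_lt_of_lt_sq; lra.
  have card_le := r_comparable_card_le_sq (ltac:(lia) : (1 < q)%nat)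
    (ltac:(lia) : (q < q - 1 + 2)%nat) cmpA.
  apply: Rle_trans (_ : Rpower (INR n) (INR 2) <= _).
    by rewrite Rpower_pow /= ?Rmult_1_r -?mult_INR; [apply: leq_INR | lra].
  apply: Rle_Rpower => //=.
  have : / 10 < / s by apply: Rinv_lt_contravar; nra.
  by rewrite /Rdiv; lra.
have [k [k_ge10 k_le_q q_lt_k]] := exists_sq_log_bracket q_large.
have k_ge10' : 10 <= INR k by rewrite -(INR_IZR_INZ 10 : INR 10 = 10); apply: leq_INR.
apply: Rle_trans (card_le_Rpower q_ge4 (leq_trans (expn2_sq_ge k_ge10) k_le_q)
  (expn2_ge_8sq k_ge10) _ n_gt0 cmpA) _; first lia.
apply: Rle_Rpower => //; apply: exponent_le => //.
apply: sqrt_lt_of_lt_sq; [lra | lra |].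
by have := log2_lt_expn2 (ltac:(lia) : (0 < q)%nat) q_lt_k; rewrite mult_INR S_INR.
Qed.

Lemma exists_log2_threshold (eps : R) : 0 < eps ->
  exists q0, forall q, (q0 <= q)%nat -> 10 / sqrt (log2 (INR q)) <= eps.
Proof.
move=> eps_gt0; have [K K_gt] := INR_unbounded (10 / eps).
have K_gt0 : 0 < INR K.
  have : 0 < 10 / eps by apply: Rdiv_lt_0_compat; lra.
  lra.
exists (expn 2 (K * K)) => q /log2_expn2_le; rewrite mult_INR => K2_le.
have K_le : INR K <= sqrt (log2 (INR q)).
  by rewrite -(sqrt_square (INR K)); [apply: sqrt_le_1_alt | lra].
apply: Rle_trans (_ : 10 / INR K <= eps).
  by apply: Rmult_le_compat_l; [lra | apply: Rinv_le_contravar].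
apply: (Rmult_le_reg_r (INR K)) => //.
have -> : 10 / INR K * INR K = 10 by field; lra.
have : 10 / eps * eps = 10 by field; lra.
by move: K_gt => /(Rmult_lt_compat_r eps _ _ eps_gt0); lra.
Qed.

End MainBound.

Theorem theorem1p2 :
  (exists C : R, (0 < C)%R /\
     forall q n : nat, (4 <= q)%N -> (0 < n)%N ->
       (F q (q - 1) n <= G q (q - 1) n)%N /\
       (INR (G q (q - 1) n) <=
          Rpower (INR n) (1 + C / sqrt (ln (INR q) / ln 2)))%R)
  /\
  (forall eps : R, (0 < eps)%R ->
     exists q0 : nat, forall q n : nat, (q0 <= q)%N -> (0 < n)%N ->
       (F q (q - 1) n <= G q (q - 1) n)%N /\
       (INR (G q (q - 1) n) <= Rpower (INR n) (1 + eps))%R).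
Proof.
split.
  exists 10%R; split; first lra.
  move=> q n q_ge4 n_gt0; split; first by apply: F_le_G; lia.
  exact: G_le_Rpower.
move=> eps eps_gt0; have [q0 q0_ok] := exists_log2_threshold eps_gt0.
exists (maxn 4 q0) => q n; rewrite geq_max => /andP[q_ge4 q_ge_q0] n_gt0.
split; first by apply: F_le_G; lia.
apply: Rle_trans (G_le_Rpower q_ge4 n_gt0) _.
apply: Rle_Rpower; first exact: (leq_INR n_gt0).
by have := q0_ok q q_ge_q0; lra.
Qed.
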